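(* Let $\mathcal A$ and $\mathcal B$ be Banach algebras and $\varphi:\mathcal A\to\mathcal B$ a continuous homomorphism with dense range. Let $I$ be a closed ideal of $\mathcal A$ and $J$ a closed ideal of $\mathcal B$ with $\varphi(I)\subseteq J$. If $\mathcal A$ has a bounded approximate identity modulo $I$, then $\mathcal B$ has a bounded approximate identity modulo $J$.
   Context: A Banach algebra $\mathcal A$ has a bounded approximate identity modulo a closed ideal $I$ if there is a bounded net $(u_\alpha)$ in $\mathcal A$ with $\lim_\alpha u_\alpha a=\lim_\alpha au_\alpha=a$ for all $a\in\mathcal A\setminus I$. *)

From HB Require Import structures.
From mathcomp Require Import all_boot all_order all_algebra.
From mathcomp Require Import all_classical all_reals all_analysis.
Set Implicit Arguments. Unset Strict Implicit. Unset Printing Implicit Defensive.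
Import Order.TTheory GRing.Theory Num.Theory.
Import numFieldNormedType.Exports.
Local Open Scope classical_set_scope.
Local Open Scope ring_scope.

Definition banach_mul (K : numFieldType) (A : completeNormedModType K)
    (mul : A -> A -> A) : Prop :=
  [/\ (forall x y z, mul x (mul y z) = mul (mul x y) z),
      ((forall x y z, mul (x + y) z = mul x z + mul y z) /\
      (forall x y z, mul x (y + z) = mul x y + mul x z)),
      (forall (k : K) x y, mul (k *: x) y = k *: mul x y),
      (forall (k : K) x y, mul x (k *: y) = k *: mul x y)
    & (forall x y, `|mul x y| <= `|x| * `|y|)].

Definition alg_hom (K : numFieldType) (A B : completeNormedModType K)
    (mulA : A -> A -> A) (mulB : B -> B -> B) (phi : A -> B) : Prop :=
  [/\ (forall x y, phi (x + y) = phi x + phi y),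
      (forall (k : K) x, phi (k *: x) = k *: phi x)
    & (forall x y, phi (mulA x y) = mulB (phi x) (phi y))].

Definition closed_ideal (K : numFieldType) (A : completeNormedModType K)
    (mul : A -> A -> A) (I : set A) : Prop :=
  [/\ closed I, I 0,
      (forall x y, I x -> I y -> I (x + y)),
      (forall (k : K) x, I x -> I (k *: x))
    & (forall a x, I x -> I (mul a x) /\ I (mul x a))].

Definition has_bai_mod (K : numFieldType) (A : completeNormedModType K)
    (mul : A -> A -> A) (I : set A) : Prop :=
  exists (D : Type) (le : D -> D -> Prop) (u : D -> A),
    [/\ ((forall d, le d d) /\
        (forall d1 d2 d3, le d1 d2 -> le d2 d3 -> le d1 d3)),
        (exists d : D, True),
        (forall d1 d2, exists d3, le d1 d3 /\ le d2 d3),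
        (exists M : K, forall d, `|u d| <= M)
      & (forall a, ~ I a ->
           forall e : K, 0 < e -> exists d0, forall d, le d0 d ->
             `|mul (u d) a - a| < e /\ `|mul a (u d) - a| < e)].

From HB Require Import structures.
From mathcomp Require Import all_boot all_order all_algebra.
From mathcomp Require Import all_classical all_reals all_analysis.
Set Implicit Arguments. Unset Strict Implicit. Unset Printing Implicit Defensive.
Import Order.TTheory GRing.Theory Num.Theory.
Import numFieldNormedType.Exports.
Local Open Scope classical_set_scope.
Local Open Scope ring_scope.

(* The image net (phi u_alpha) is bounded and, phi being a bounded
   homomorphism, it acts as an approximate unit on phi a whenever a is outside
   I.  For a bounded net, the set of elements on which it acts as an
   approximate unit is closed.  As phi has dense range and the complement of J
   is open, every b outside J is a limit of points phi a outside J, and such an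
   a lies outside I because phi maps I into J. *)

Lemma open_subset_closureI (T : topologicalType) (S U : set T) :
  closure S = setT -> open U -> U `<=` closure (S `&` U).
Proof.
move=> denseS oU x Ux N Nx.
have NUx : nbhs x (N `&` U) by apply: filterI => //; exact: open_nbhs_nbhs.
have clSx : closure S x by rewrite denseS.
by have [y [Sy [Ny Uy]]] := clSx _ NUx; exists y.
Qed.

Lemma continuous_linear_norm_le (K : numFieldType) (V W : normedModType K)
    (f : {linear V -> W}) :
  continuous f -> exists2 C : K, 0 < C & forall x, `|f x| <= C * `|x|.
Proof.
by move=> /(_ 0) /continuous_linear_bounded /linear_boundedP /pinfty_ex_gt0.
Qed.

Section BanachAlgebra.
Variables (K : numFieldType) (A : completeNormedModType K) (mul : A -> A -> A).
Hypothesis mul_banach : banach_mul mul.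

Lemma banach_mulBr x y z : mul x (y - z) = mul x y - mul x z.
Proof.
case: mul_banach => _ [_ mulDr] _ mulZr _.
by rewrite mulDr -scaleN1r mulZr scaleN1r.
Qed.

Lemma banach_mulBl x y z : mul (y - z) x = mul y x - mul z x.
Proof.
case: mul_banach => _ [mulDl _] mulZl _ _.
by rewrite mulDl -scaleN1r mulZl scaleN1r.
Qed.

Lemma norm_banach_mul_le x y : `|mul x y| <= `|x| * `|y|.
Proof. by case: mul_banach. Qed.

Lemma norm_mul_subr_le v b b' :
  `|mul v b - b| <= `|v| * `|b - b'| + `|mul v b' - b'| + `|b' - b|.
Proof.
have -> : mul v b - b = mul v (b - b') + (mul v b' - b') + (b' - b).
  by rewrite banach_mulBr !addrA !subrK.
rewrite (le_trans (ler_normD _ _)) // lerD2r (le_trans (ler_normD _ _)) //.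
by rewrite lerD2r norm_banach_mul_le.
Qed.

Lemma norm_mul_subl_le v b b' :
  `|mul b v - b| <= `|b - b'| * `|v| + `|mul b' v - b'| + `|b' - b|.
Proof.
have -> : mul b v - b = mul (b - b') v + (mul b' v - b') + (b' - b).
  by rewrite banach_mulBl !addrA !subrK.
rewrite (le_trans (ler_normD _ _)) // lerD2r (le_trans (ler_normD _ _)) //.
by rewrite lerD2r norm_banach_mul_le.
Qed.

Definition approx_unit_at (D : Type) (le : D -> D -> Prop) (u : D -> A) (a : A) :=
  forall e : K, 0 < e -> exists d0, forall d, le d0 d ->
    `|mul (u d) a - a| < e /\ `|mul a (u d) - a| < e.

Lemma closed_approx_unit_at (D : Type) (le : D -> D -> Prop) (u : D -> A) (M : K) :
  (forall d, `|u d| <= M) -> closed (approx_unit_at le u).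
Proof.
move=> uM b clb e e0.
(* [M] can be negative when [D] is empty, hence [`|M|] below. *)
have M1 : 0 < `|M| + 1 by rewrite ltr_wpDl.
have e2 : 0 < e / 2 by rewrite divr_gt0.
set eps := e / 2 / (`|M| + 1).
have eps0 : 0 < eps by rewrite divr_gt0.
have [b' [ub' bb']] := clb _ (nbhsx_ballx b eps eps0).
rewrite -ball_normE /= in bb'.
have epsE : (`|M| + 1) * eps = e / 2 by rewrite mulrC divfK ?gt_eqF.
have small d : `|u d| * `|b - b'| + `|b' - b| < e / 2.
  have uM' : `|u d| <= `|M|.
    by apply: le_trans (uM d) (real_ler_norm (ger0_real (le_trans _ (uM d)))).
  rewrite [`|b' - b|]distrC -[X in _ + X]mul1r -mulrDl.
  apply: le_lt_trans (ler_wpM2r (normr_ge0 _) (lerD uM' (lexx 1))) _.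
  by rewrite -epsE ltr_pM2l.
have [d0 hd0] := ub' _ e2.
exists d0 => d /hd0 [ubl ubr]; rewrite (splitr e); split.
- apply: le_lt_trans (norm_mul_subr_le _ _ b') _.
  by rewrite addrAC ltrD.
- apply: le_lt_trans (norm_mul_subl_le _ _ b') _.
  by rewrite addrAC mulrC ltrD.
Qed.

End BanachAlgebra.

Lemma approx_unit_at_map (K : numFieldType) (A B : completeNormedModType K)
    (mulA : A -> A -> A) (mulB : B -> B -> B) (f : {linear A -> B}) (C : K)
    (D : Type) (le : D -> D -> Prop) (u : D -> A) (a : A) :
  0 < C -> (forall x, `|f x| <= C * `|x|) ->
  (forall x y, f (mulA x y) = mulB (f x) (f y)) ->
  approx_unit_at mulA le u a -> approx_unit_at mulB le (f \o u) (f a).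
Proof.
move=> C0 fC fM ua e e0.
have [d0 hd0] := ua _ (divr_gt0 e0 C0).
have fsmall x : `|x| < e / C -> `|f x| < e.
  by move=> xe; rewrite (le_lt_trans (fC x)) // mulrC -ltr_pdivlMr.
by exists d0 => d /hd0 [l r] /=; rewrite -!fM -!linearB !fsmall.
Qed.

Theorem corollary3p6 (K : numFieldType) (A B : completeNormedModType K)
    (mulA : A -> A -> A) (mulB : B -> B -> B) (phi : A -> B)
    (I : set A) (J : set B) :
  banach_mul mulA -> banach_mul mulB ->
  alg_hom mulA mulB phi -> continuous phi ->
  closure (range phi) = setT ->
  closed_ideal mulA I -> closed_ideal mulB J ->
  phi @` I `<=` J ->
  has_bai_mod mulA I -> has_bai_mod mulB J.
Proof.
move=> _ bB [phiD phiZ phiM] phic denseR _ [Jcl _ _ _ _] phiIJ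
  [D [le [u [preorder ne dir [M uM] uI]]]].
pose f : {linear A -> B} :=
  HB.pack phi (GRing.isSemilinear.Build K A B *:%R phi (phiZ, phiD)).
have [C C0 fC] := continuous_linear_norm_le (f := f) phic.
have fuM d : `|f (u d)| <= C * M.
  by rewrite (le_trans (fC _)) // ler_pM2l.
exists D, le, (phi \o u); split => //; first by exists (C * M).
move=> b nJb; apply: (closed_approx_unit_at bB fuM).
apply: closureS (open_subset_closureI denseR (closed_openC Jcl) nJb).
move=> _ [[a _ <-] nJa]; apply: (approx_unit_at_map (f := f) C0 fC phiM).
by apply: uI => Ia; apply: nJa; apply: phiIJ; exists a.
Qed.
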